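(* For unknown single-minded bidders in a multi-unit auction with $m$ identical items, the following randomized mechanism obtains a $400$-approximation to the optimal social welfare (its expected welfare under truthful play is at least $\mathrm{OPT}/400$ on every instance). With probability $1/2$, run an ascending-price auction on the grand bundle of all $m$ items. With the remaining probability $1/2$: place each bidder independently in a set $S$ with probability $1/2$ and in $U$ otherwise; bidders in $S$ receive nothing and report their valuations; compute the optimal welfare $O$ achievable by allocating the items among bidders of $S$ only; then iterate over the bidders of $U$ in an arbitrary order, and let each purchase her preferred number of the remaining items at price $O/(10m)$ per item.
   Context: Bidder $i$ is single-minded: there are private $x_i\ge0$ and $d_i\in\{1,\dots,m\}$ with $v_i(q)=x_i$ if $q\ge d_i$ and $v_i(q)=0$ otherwise; utilities are quasi-linear. $\mathrm{OPT}$ is the maximum of $\sum_iv_i(q_i)$ over nonnegative integers with $\sum_iq_i\le m$. In the ascending auction on the grand bundle, the highest-value bidder wins all items. The expectation is over the mechanism's randomness. *)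

From HB Require Import structures.
From mathcomp Require Import all_boot all_order all_algebra.
Set Implicit Arguments. Unset Strict Implicit. Unset Printing Implicit Defensive.
Import Order.TTheory GRing.Theory Num.Theory.
Local Open Scope ring_scope.

Section Auction.
Variables (R : realFieldType) (n m : nat).
Variables (x : 'I_n -> R) (d : 'I_n -> nat).

Definition sm_val (i : 'I_n) (q : nat) : R := if (d i <= q)%N then x i else 0.

Definition opt_on (A : {set 'I_n}) : R :=
  \big[Num.max/0]_(q : {ffun 'I_n -> 'I_m.+1} | (\sum_(i in A) q i <= m)%N)
     \sum_(i in A) sm_val i (q i).

Definition OPT : R := opt_on setT.

(* ascending auction on the grand bundle: the highest-value bidder for the
   grand bundle wins all m items; welfare = her value for m items *)
Definition grand_bundle_welfare : R := \big[Num.max/0]_(i : 'I_n) sm_val i m.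

Definition price (S : {set 'I_n}) : R := opt_on S / (10 * m%:R).

Fixpoint posted_welfare (choose : 'I_n -> nat -> nat) (U : {set 'I_n})
    (s : seq 'I_n) (r : nat) : R :=
  match s with
  | [::] => 0
  | i :: s' =>
      if i \in U then
        sm_val i (choose i r) + posted_welfare choose U s' (r - choose i r)
      else posted_welfare choose U s' r
  end.

(* [choose] is a truthful (utility-maximizing) purchase rule at price p:
   it never buys more than is available and maximizes
   v_i(q) - q * p among all feasible q <= r (ties arbitrary). *)
Definition preferred_choice (p : R) (choose : 'I_n -> nat -> nat) : Prop :=
  forall i r, (choose i r <= r)%N /\
    forall q, (q <= r)%N ->
      sm_val i q - q%:R * p <= sm_val i (choose i r) - (choose i r)%:R * p.

(* expected welfare of the randomized mechanism: with prob 1/2 grand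
   bundle; with prob 1/2 a uniformly random S (each bidder independently
   w.p. 1/2, i.e. each S has prob 2^-n), then the posted price phase on
   U = ~: S in the order [order S] with purchase rule [choose S]. *)
Definition mech_expected_welfare (order : {set 'I_n} -> seq 'I_n)
    (choose : {set 'I_n} -> 'I_n -> nat -> nat) : R :=
  2^-1 * grand_bundle_welfare +
  2^-1 * \sum_(S : {set 'I_n})
            (2^-1) ^+ n * posted_welfare (choose S) (~: S) (order S) m.

End Auction.

From HB Require Import structures.
From mathcomp Require Import all_boot all_order all_algebra.
From mathcomp Require Import zify ring lra.
Set Implicit Arguments. Unset Strict Implicit. Unset Printing Implicit Defensive.
Import Order.TTheory GRing.Theory Num.Theory.
Local Open Scope ring_scope.

(* With probability 1/2 the grand bundle earns max_i x_i, so we may assume every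
   x_i is below OPT/200.  Fix an optimal allocation and keep only its winners
   demanding at most m/2 items; since at most one winner demands more, their
   total value Y is at least 199/200 OPT.  For a sample S, let a be the kept value
   inside S and O <= OPT the optimum on S.  At price O/(10m), either more than m/2
   items are sold, for a welfare of at least O/20, or at least m/2 items remain
   throughout, so every kept winner in U can afford her bundle and the welfare is
   at least (Y - a) - O/10.  Both bounds exceed OPT/100 when |a - Y/2| < OPT/5,
   whence the welfare is at least OPT/100 - (a - Y/2)^2/(4 OPT) for every S.
   Averaging over S, where a has variance (sum of the squared kept values)/4,
   at most OPT^2/800, gives an expected posted welfare of at least OPT/200. *)

Section Valuations.
Variables (R : realFieldType) (n m : nat) (x : 'I_n -> R) (d : 'I_n -> nat).
Hypothesis x_ge0 : forall i, 0 <= x i.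
Hypothesis d_gt0 : forall i, (0 < d i)%N.
Implicit Types A B : {set 'I_n}.

Lemma sm_val0 i : sm_val x d i 0 = 0.
Proof. by rewrite /sm_val leqNgt d_gt0. Qed.

Lemma sm_val_ge0 i q : 0 <= sm_val x d i q.
Proof. by rewrite /sm_val; case: ifP. Qed.

Lemma opt_on_ge0 A : 0 <= opt_on m x d A.
Proof. exact: bigmax_ge_id. Qed.

Lemma opt_on_ge A (q : {ffun 'I_n -> 'I_m.+1}) :
  (\sum_(i in A) q i <= m)%N -> \sum_(i in A) sm_val x d i (q i) <= opt_on m x d A.
Proof. by move=> qA; apply: le_bigmax_cond. Qed.

Lemma opt_on_attained A : exists2 q : {ffun 'I_n -> 'I_m.+1},
  (\sum_(i in A) q i <= m)%N & opt_on m x d A = \sum_(i in A) sm_val x d i (q i).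
Proof.
rewrite /opt_on; have [||q qA ->] := @eq_bigmax _ _ _ 0 [ffun=> ord0]
  (fun q : {ffun 'I_n -> 'I_m.+1} => \sum_(i in A) q i <= m)%N
  (fun q : {ffun 'I_n -> 'I_m.+1} => \sum_(i in A) sm_val x d i (q i)).
- by rewrite big1 // => i _; rewrite ffunE.
- by move=> q _; apply: sumr_ge0 => i _; apply: sm_val_ge0.
- by exists q.
Qed.

Lemma OPT_attained : exists2 q : {ffun 'I_n -> 'I_m.+1},
  (\sum_i q i <= m)%N & OPT m x d = \sum_i sm_val x d i (q i).
Proof.
have [q] := opt_on_attained setT.
by rewrite /OPT !(eq_bigl _ _ (@in_setT _)) => q_feasible ->; exists q.
Qed.

Lemma opt_on_subset A B : A \subset B -> opt_on m x d A <= opt_on m x d B.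
Proof.
move=> AB; apply: bigmax_le => [|q qA]; first exact: opt_on_ge0.
pose qB := [ffun i => if i \in A then q i else ord0] : {ffun 'I_n -> 'I_m.+1}.
have demandB : (\sum_(i in B) qB i = \sum_(i in A) q i)%N.
  rewrite big_mkcond [RHS]big_mkcond; apply: eq_bigr => i _; rewrite ffunE.
  by case: (boolP (i \in A)) => [/(subsetP AB) -> | _] //; case: ifP.
have valueB : \sum_(i in B) sm_val x d i (qB i) = \sum_(i in A) sm_val x d i (q i).
  rewrite big_mkcond [RHS]big_mkcond; apply: eq_bigr => i _; rewrite ffunE.
  case: (boolP (i \in A)) => [/(subsetP AB) -> | _] //.
  by case: ifP => // _; rewrite sm_val0.
by rewrite -valueB; apply: opt_on_ge; rewrite demandB.
Qed.

End Valuations.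

Section PostedPrice.
Variables (R : realFieldType) (n : nat) (x : 'I_n -> R) (d : 'I_n -> nat).
Hypothesis x_ge0 : forall i, 0 <= x i.
Hypothesis d_gt0 : forall i, (0 < d i)%N.
Variables (p : R) (choose : 'I_n -> nat -> nat) (U : {set 'I_n}).
Hypothesis p_ge0 : 0 <= p.
Hypothesis choose_preferred : preferred_choice x d p choose.

Local Notation welfare := (posted_welfare x d choose U).

Fixpoint posted_remaining (s : seq 'I_n) (r : nat) : nat :=
  match s with
  | [::] => r
  | i :: s' =>
      if i \in U then posted_remaining s' (r - choose i r) else posted_remaining s' r
  end.

Lemma posted_remaining_le s r : (posted_remaining s r <= r)%N.
Proof.
elim: s r => [|i s IH] r //=; case: ifP => _ //.
exact: leq_trans (IH _) (leq_subr _ _).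
Qed.

(* Compare with buying nothing. *)
Lemma preferred_choice_payment_le i r :
  (choose i r)%:R * p <= sm_val x d i (choose i r).
Proof.
have [_ best] := choose_preferred i r; have := best 0%N (leq0n _).
by rewrite sm_val0 // mul0r subr0 subr_ge0.
Qed.

Lemma preferred_choice_surplus_le i r :
  (d i <= r)%N -> x i - (d i)%:R * p <= sm_val x d i (choose i r).
Proof.
move=> dr; have [_ best] := choose_preferred i r; have := best _ dr.
rewrite /sm_val leqnn => /le_trans; apply.
by rewrite lerBlDr lerDl mulr_ge0 ?ler0n.
Qed.

Lemma posted_welfare_ge0 s r : 0 <= welfare s r.
Proof.
elim: s r => [|i s IH] r //=; case: ifP => _ //.
by rewrite addr_ge0 ?sm_val_ge0.
Qed.

Lemma posted_welfare_ge_revenue s r :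
  p * (r%:R - (posted_remaining s r)%:R) <= welfare s r.
Proof.
elim: s r => [|i s IH] r /=; first by rewrite subrr mulr0.
case: ifP => _ //.
have := IH (r - choose i r)%N; rewrite natrB; last exact: (choose_preferred i r).1.
have := preferred_choice_payment_le i r; lra.
Qed.

Lemma posted_welfare_ge_surplus (P : pred 'I_n) s r :
  (forall i, P i -> (d i <= posted_remaining s r)%N) ->
  \sum_(i <- s | (i \in U) && P i) (x i - (d i)%:R * p) <= welfare s r.
Proof.
elim: s r => [|i s IH] r /=; first by rewrite big_nil.
rewrite big_cons; case: (i \in U) => /= afford; last exact: IH.
case: ifP => Pi; last by rewrite -[X in X <= _]add0r lerD ?sm_val_ge0 ?IH.
rewrite lerD ?IH // preferred_choice_surplus_le //.
apply: leq_trans (afford _ Pi) _.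
exact: leq_trans (posted_remaining_le _ _) (leq_subr _ _).
Qed.

(* Either more than half of the supply is sold, or every bidder of P demanding at
   most half of it can still afford her bundle when her turn comes. *)
Lemma posted_welfare_dichotomy (P : pred 'I_n) s m :
  perm_eq s (enum 'I_n) ->
  (forall i, P i -> (2 * d i <= m)%N) -> (\sum_(i | P i) d i <= m)%N ->
  p * m%:R / 2 <= welfare s m \/
  \sum_(i in U | P i) x i - p * m%:R <= welfare s m.
Proof.
move=> s_perm P_half P_demand.
have [sold_half|sold_more] := leqP m (2 * posted_remaining s m).
  right; have afford i : P i -> (d i <= posted_remaining s m)%N.
    by move=> /P_half; lia.
  apply: le_trans (posted_welfare_ge_surplus afford).
  rewrite (perm_big _ s_perm) big_enum_cond /= sumrB.
  rewrite lerD2l lerN2 -mulr_suml mulrC ler_wpM2l // -natr_sum ler_nat.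
  apply: leq_trans P_demand; rewrite big_mkcond [X in (_ <= X)%N]big_mkcond /=.
  by apply: leq_sum => i _; case: (i \in U).
left; apply: le_trans (posted_welfare_ge_revenue s m).
have rem_half : 2 * (posted_remaining s m)%:R <= m%:R :> R by rewrite -natrM ler_nat ltnW.
rewrite -mulrA ler_wpM2l //; lra.
Qed.

End PostedPrice.

Section SubsetSumVariance.
Variables (R : realFieldType) (n : nat) (y : 'I_n -> R).

Definition set_sign (S : {set 'I_n}) i : R := if i \in S then 1 else -1.

Definition toggle i (S : {set 'I_n}) := if i \in S then S :\ i else i |: S.

Lemma toggleK i : involutive (toggle i).
Proof.
move=> S; rewrite /toggle; case: (boolP (i \in S)) => iS.
  by rewrite !inE eqxx /= setD1K.
by rewrite setU11 setU1K.
Qed.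

Lemma sum_in_centered (S : {set 'I_n}) :
  \sum_(i in S) y i - (\sum_i y i) / 2 = (\sum_i y i * set_sign S i) / 2.
Proof.
rewrite [\sum_i y i](bigID (mem S)) [\sum_i _ * _](bigID (mem S)) /=.
rewrite [X in _ = (X + _) / 2](eq_bigr y) => [|i iS]; last by rewrite /set_sign iS mulr1.
rewrite [X in _ = (_ + X) / 2](eq_bigr (fun i => - y i)) => [|i /negbTE iS]; last first.
  by rewrite /set_sign iS mulrN1.
rewrite sumrN; lra.
Qed.

(* For i != j, toggling i is a bijection on subsets that flips the sign of the product. *)
Lemma sum_set_sign_mul i j : \sum_(S : {set 'I_n}) set_sign S i * set_sign S j =
  if i == j then #|{set 'I_n}|%:R else 0.
Proof.
case: eqP => [<- | /eqP ij].
  rewrite (eq_bigr (fun _ => 1)) => [|S _]; last first.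
    by rewrite /set_sign; case: ifP => _; lra.
  by rewrite sumr_const; congr _%:R; apply: eq_card.
have ji : (j == i) = false by rewrite eq_sym (negbTE ij).
set s := \sum_S _; suff: s = - s by lra.
rewrite {1}/s (reindex_inj (can_inj (toggleK i))) /s -sumrN; apply: eq_bigr => S _.
rewrite /set_sign /toggle; case: (boolP (i \in S)) => _;
  by rewrite !inE eqxx /= ji /=; case: ifP => _; lra.
Qed.

Lemma uniform_set_weight : (2^-1) ^+ n * #|{set 'I_n}|%:R = 1 :> R.
Proof.
rewrite -cardsT -powersetT card_powerset cardsT card_ord natrX -exprMn.
by rewrite mulVf ?expr1n ?pnatr_eq0.
Qed.

Lemma subset_sum_variance :
  \sum_(S : {set 'I_n}) (2^-1) ^+ n * (\sum_(i in S) y i - (\sum_i y i) / 2) ^+ 2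
  = (\sum_i y i ^+ 2) / 4.
Proof.
have sq (A : R) : (A / 2) ^+ 2 = 4^-1 * (A * A) by rewrite expr2; field.
under eq_bigr do rewrite sum_in_centered sq big_distrlr /= mulrA.
rewrite -mulr_sumr exchange_big /=.
under eq_bigr do rewrite exchange_big /=.
have pair i j : \sum_(S : {set 'I_n}) y i * set_sign S i * (y j * set_sign S j) =
    y i * y j * (if i == j then #|{set 'I_n}|%:R else 0).
  by rewrite -sum_set_sign_mul mulr_sumr; apply: eq_bigr => S _; ring.
under eq_bigr do under eq_bigr do rewrite pair.
rewrite mulr_sumr [RHS]mulr_suml; apply: eq_bigr => i _.
rewrite (bigD1 i) //= eqxx big1 => [|j /negbTE]; last first.
  by rewrite eq_sym => ->; rewrite mulr0.
rewrite addr0; transitivity ((2^-1) ^+ n * #|{set 'I_n}|%:R * (y i ^+ 2 / 4)).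
  by ring.
by rewrite uniform_set_weight mul1r.
Qed.

End SubsetSumVariance.

(* Here w is the posted welfare on a sample S, a the kept value inside S and O the
   optimum on S; averaging this minorant over S replaces Chebyshev's inequality. *)
Lemma dichotomy_quadratic_bound (R : realFieldType) (V Y a O w : R) :
  0 < V -> 199 / 200 * V <= Y -> a <= O -> O <= V -> 0 <= w ->
  O / 20 <= w \/ (Y - a) - O / 10 <= w ->
  V * V / 100 - (a - Y / 2) ^+ 2 / 4 <= V * w.
Proof.
move=> V_gt0 Y_ge aO OV w_ge0 w_ge.
have Vw_ge0 : 0 <= V * w by rewrite mulr_ge0 // ltW.
have [far|near] := lerP (V / 5) `|a - Y / 2|.
  have : V / 5 * (V / 5) <= (a - Y / 2) ^+ 2.
    by rewrite -real_normK ?num_real // ler_pM //; lra.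
  lra.
have : V / 100 <= w.
  by move: near; rewrite ltr_norml => /andP[? ?]; case: w_ge; lra.
move=> /(ler_wpM2l (ltW V_gt0)); have := sqr_ge0 (a - Y / 2); lra.
Qed.

Section Mechanism.
Variables (R : realFieldType) (n m : nat) (x : 'I_n -> R) (d : 'I_n -> nat).
Hypothesis x_ge0 : forall i, 0 <= x i.
Hypothesis d_gt0 : forall i, (0 < d i)%N.
Variables (order : {set 'I_n} -> seq 'I_n) (choose : {set 'I_n} -> 'I_n -> nat -> nat).
Hypothesis order_perm : forall S, perm_eq (order S) (enum 'I_n).
Hypothesis choose_preferred : forall S, preferred_choice x d (price m x d S) (choose S).
Implicit Type S : {set 'I_n}.

Local Notation V := (OPT m x d).
Local Notation posted S := (posted_welfare x d (choose S) (~: S) (order S) m).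
Local Notation expected_posted := (\sum_(S : {set 'I_n}) (2^-1) ^+ n * posted S).

Lemma price_ge0 S : 0 <= price m x d S.
Proof. by rewrite divr_ge0 ?opt_on_ge0 // mulr_ge0 ?ler0n. Qed.

Lemma expected_posted_ge0 : 0 <= expected_posted.
Proof.
apply: sumr_ge0 => S _.
by rewrite mulr_ge0 ?exprn_ge0 ?invr_ge0 ?ler0n ?posted_welfare_ge0.
Qed.

Lemma grand_bundle_welfare_ge0 : 0 <= grand_bundle_welfare m x d.
Proof. exact: bigmax_ge_id. Qed.

Lemma grand_bundle_welfare_ge i : (d i <= m)%N -> x i <= grand_bundle_welfare m x d.
Proof. by move=> dm; apply: le_trans (le_bigmax _ _ i); rewrite /sm_val dm. Qed.

Lemma mech_expected_welfare_ge_grand :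
  grand_bundle_welfare m x d / 2 <= mech_expected_welfare m x d order choose.
Proof. by rewrite /mech_expected_welfare; have := expected_posted_ge0; lra. Qed.

Lemma mech_expected_welfare_ge_posted :
  expected_posted / 2 <= mech_expected_welfare m x d order choose.
Proof. by rewrite /mech_expected_welfare; have := grand_bundle_welfare_ge0; lra. Qed.

Variable q : {ffun 'I_n -> 'I_m.+1}.
Hypothesis q_feasible : (\sum_i q i <= m)%N.
Hypothesis q_optimal : V = \sum_i sm_val x d i (q i).

Definition small_winner i := ((d i <= q i) && (2 * d i <= m))%N.

Definition small_winner_value i := if small_winner i then x i else 0.

Local Notation y := small_winner_value.
Local Notation Y := (\sum_i small_winner_value i).

Lemma small_winner_value_ge0 i : 0 <= y i.
Proof. by rewrite /small_winner_value; case: ifP. Qed.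

Lemma small_winner_value_le i : y i <= sm_val x d i (q i).
Proof.
rewrite /small_winner_value /small_winner /sm_val.
by case: (d i <= q i)%N => //=; case: ifP.
Qed.

Lemma sum_small_winner_value_le_opt_on S : \sum_(i in S) y i <= opt_on m x d S.
Proof.
have q_S : (\sum_(i in S) q i <= m)%N.
  by apply: leq_trans q_feasible; rewrite [X in (_ <= X)%N](bigID (mem S)) leq_addr.
apply: le_trans (opt_on_ge x d q_S).
by apply: ler_sum => i _; apply: small_winner_value_le.
Qed.

Lemma sum_small_winner_value_le_OPT : Y <= V.
Proof. by rewrite q_optimal; apply: ler_sum => i _; apply: small_winner_value_le. Qed.

Lemma small_winners_demand : (\sum_(i | small_winner i) d i <= m)%N.
Proof.
apply: leq_trans q_feasible; rewrite big_mkcond /=; apply: leq_sum => i _.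
by rewrite /small_winner; case: ifP => // /andP[].
Qed.

(* Their demands, each above m/2, add up to at most m. *)
Lemma card_large_winners_le1 : (#|[pred i | (d i <= q i) && (m < 2 * d i)]%N| <= 1)%N.
Proof.
set B := [pred i | _]; have B_demand : (#|B| * m.+1 <= 2 * m)%N.
  rewrite -sum_nat_const; apply: leq_trans (_ : \sum_(i in B) 2 * d i <= _)%N.
    by apply: leq_sum => i; rewrite inE => /andP[_]; lia.
  apply: leq_trans (leq_mul (leqnn 2) q_feasible); rewrite big_distrr /= big_mkcond.
  by apply: leq_sum => i _; case: ifP => //; rewrite inE => /andP[? _]; lia.
nia.
Qed.

Hypothesis OPT_gt0 : 0 < V.

Lemma items_gt0 : (0 < m)%N.
Proof.
rewrite lt0n; apply/eqP => m0; move: OPT_gt0; rewrite q_optimal big1 ?ltxx // => i _.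
have -> : nat_of_ord (q i) = 0%N by have := ltn_ord (q i); lia.
exact: sm_val0.
Qed.

Lemma posted_welfare_cases S :
  opt_on m x d S / 20 <= posted S \/
  \sum_(i in ~: S) y i - opt_on m x d S / 10 <= posted S.
Proof.
have price_items : price m x d S * m%:R = opt_on m x d S / 10.
  by rewrite /price; field; rewrite pnatr_eq0 -lt0n items_gt0.
have half i : small_winner i -> (2 * d i <= m)%N by case/andP.
have [sold|afford] := posted_welfare_dichotomy x_ge0 d_gt0 (~: S) (price_ge0 S)
  (choose_preferred S) (order_perm S) half small_winners_demand.
  by left; move: sold; rewrite price_items; lra.
by right; move: afford; rewrite price_items big_mkcondr.
Qed.

Hypothesis values_small : forall i, x i <= V / 200.

Lemma sum_small_winner_value_ge : 199 / 200 * V <= Y.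
Proof.
set B := [pred i | (d i <= q i) && (m < 2 * d i)]%N.
have lost : V - Y = \sum_(i in B) x i.
  rewrite q_optimal -sumrB [RHS]big_mkcond; apply: eq_bigr => i _.
  rewrite /small_winner_value /small_winner /sm_val inE /=.
  by case: (d i <= q i)%N; rewrite /= ?subr0 //; case: leqP; rewrite ?subrr ?subr0.
have : \sum_(i in B) x i <= V / 200.
  apply: le_trans (_ : \sum_(i in B) V / 200 <= _); first exact: ler_sum.
  rewrite sumr_const -[leRHS]mulr1n ler_wpMn2l ?card_large_winners_le1 //.
  by rewrite divr_ge0 // ltW.
lra.
Qed.

Lemma posted_welfare_quadratic_bound S :
  V * V / 100 - (\sum_(i in S) y i - Y / 2) ^+ 2 / 4 <= V * posted S.
Proof.
have split : \sum_(i in ~: S) y i = Y - \sum_(i in S) y i.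
  rewrite [Y](bigID (mem S)) /= addrC addrK.
  by apply: eq_bigl => i; rewrite inE.
apply: dichotomy_quadratic_bound OPT_gt0 sum_small_winner_value_ge
  (sum_small_winner_value_le_opt_on S) (opt_on_subset m x d_gt0 (subsetT S))
  (posted_welfare_ge0 d x_ge0 _ _ _ _) _.
by rewrite -split; apply: posted_welfare_cases.
Qed.

Lemma expected_posted_welfare_ge : V / 200 <= expected_posted.
Proof.
have V200_ge0 : 0 <= V / 200 by rewrite divr_ge0 // ltW.
have sum_sq : \sum_i y i ^+ 2 <= V * V / 200.
  apply: le_trans (_ : \sum_i y i * (V / 200) <= _).
    apply: ler_sum => i _; rewrite expr2 ler_wpM2l ?small_winner_value_ge0 //.
    by rewrite /small_winner_value; case: ifP.
  by rewrite -mulr_suml -[leRHS]mulrA ler_wpM2r ?sum_small_winner_value_le_OPT.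
have : V * (V / 200) <= V * expected_posted.
  rewrite mulr_sumr; apply: le_trans (_ : \sum_(S : {set 'I_n}) (2^-1) ^+ n *
      (V * V / 100 - (\sum_(i in S) y i - Y / 2) ^+ 2 / 4) <= _); last first.
    apply: ler_sum => S _; rewrite mulrCA ler_wpM2l ?exprn_ge0 ?invr_ge0 ?ler0n //.
    exact: posted_welfare_quadratic_bound.
  rewrite (eq_bigr (fun S => V * V / 100 * (2^-1) ^+ n -
      (2^-1) ^+ n * (\sum_(i in S) y i - Y / 2) ^+ 2 / 4)) => [|S _]; last by ring.
  rewrite sumrB -mulr_sumr -mulr_suml subset_sum_variance sumr_const.
  rewrite -(mulr_natr ((2^-1) ^+ n)) uniform_set_weight; nra.
by rewrite ler_pM2l.
Qed.

End Mechanism.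

Theorem lemma3p5 (R : realFieldType) (n m : nat)
  (x : 'I_n -> R) (d : 'I_n -> nat)
  (hx : forall i, 0 <= x i)
  (hd : forall i, (1 <= d i <= m)%N)
  (order : {set 'I_n} -> seq 'I_n)
  (horder : forall S, perm_eq (order S) (enum 'I_n))
  (choose : {set 'I_n} -> 'I_n -> nat -> nat)
  (hchoose : forall S, preferred_choice x d (price m x d S) (choose S)) :
  OPT m x d / 400 <= mech_expected_welfare m x d order choose.
Proof.
have d_gt0 i : (0 < d i)%N by case/andP: (hd i).
have grand := mech_expected_welfare_ge_grand m d hx order choose.
have posted := mech_expected_welfare_ge_posted m x d order choose.
have [V_le0 | V_gt0] := lerP (OPT m x d) 0.
  by have := expected_posted_ge0 m d hx order choose; lra.
case: (boolP [exists i, OPT m x d / 200 <= x i]) => [/existsP[i large] | /existsPn small].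
  by have := grand_bundle_welfare_ge x (proj2 (andP (hd i))); lra.
have {}small i : x i <= OPT m x d / 200 by rewrite ltW // ltNge small.
have [q q_feasible q_optimal] := OPT_attained m d hx.
have := expected_posted_welfare_ge hx d_gt0 horder hchoose
  q_feasible q_optimal V_gt0 small.
lra.
Qed.
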